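(* Let $G=(V,E)$ be a finite simple graph and let $s\in[0,1]^{V}$. Then there exists a fort $F$ of $G$ with $\sum_{v\in F}s_v<1$ if and only if every optimal solution $x$ of the integer program $$\text{minimize }\sum_{v\in V}s_vx_v\ \text{ subject to }\ \sum_{v\in V}x_v\geq1,\quad x_u-x_v+\sum_{w\in N(u)\setminus\{v\}}x_w\geq0\ \ \forall v\in V,\ u\in N(v),\quad x\in\{0,1\}^V$$ has objective value less than one.
   Context: $N(u)$ denotes the neighborhood of $u$. A fort of $G$ is a non-empty set $F\subseteq V$ such that no vertex $u\in V\setminus F$ has exactly one neighbor in $F$. *)

From HB Require Import structures.
From mathcomp Require Import all_boot all_order all_algebra.
Set Implicit Arguments. Unset Strict Implicit. Unset Printing Implicit Defensive.
Import Order.TTheory GRing.Theory Num.Theory.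
Local Open Scope ring_scope.

(* A finite simple graph: vertex set a finType T, adjacency a symmetric,
   irreflexive boolean relation e.  N(u) = [set w | e u w]. *)
Definition simple_graph (T : finType) (e : rel T) : Prop :=
  symmetric e /\ irreflexive e.

Definition is_fort (T : finType) (e : rel T) (F : {set T}) : Prop :=
  F != set0 /\ forall u, u \notin F -> #|[set w in F | e u w]| != 1%N.

(* The integer program, with x in {0,1}^V represented as x : T -> bool
   (x_v = 1 iff x v = true). *)
Definition ip_objective (R : ringType) (T : finType) (s : T -> R) (x : T -> bool) : R :=
  \sum_(v : T) s v * (x v)%:R.

Definition ip_feasible (R : numDomainType) (T : finType) (e : rel T) (x : T -> bool) : Prop :=
  (1 <= \sum_(v : T) ((x v)%:R : R)) /\
  (forall v u, e v u ->
     0 <= ((x u)%:R : R) - (x v)%:R + \sum_(w : T | e u w && (w != v)) ((x w)%:R : R)).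

Definition ip_optimal (R : numDomainType) (T : finType) (e : rel T) (s : T -> R)
    (x : T -> bool) : Prop :=
  @ip_feasible R T e x /\
  forall y : T -> bool, @ip_feasible R T e y -> ip_objective s x <= ip_objective s y.

From HB Require Import structures.
From mathcomp Require Import all_boot all_order all_algebra.
Import Order.TTheory GRing.Theory Num.Theory.
Local Open Scope ring_scope.
Set Implicit Arguments. Unset Strict Implicit.

(* A 0/1 vector x is feasible exactly when its support X is a fort: the
   constraint for an edge (v, u) only binds when v is in X and u is not, and
   then asks u to have a neighbour in X other than v; over all such v this is
   #|N(u) :&: X| != 1.  Since the objective of x is the weight of X, the
   optimum of the program is the least weight of a fort, which exists because
   V itself is a fort. *)

Lemma sumr_indicator_card (R : pzSemiRingType) (T : finType) (P : pred T) (x : T -> bool) :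
  \sum_(v | P v) ((x v)%:R : R) = #|[set v | P v && x v]|%:R.
Proof.
rewrite -sum1dep_card natr_sum big_mkcondr /=; apply: eq_bigr => v _.
by case: (x v).
Qed.

Lemma card_neq1P (T : finType) (A : {set T}) :
  reflect (forall v, v \in A -> (0 < #|A :\ v|)%N) (#|A| != 1)%N.
Proof.
apply: (iffP idP) => [A_neq1 v vA | A_D1].
  by move: A_neq1; rewrite (cardsD1 v) vA add1n eqSS lt0n.
case: (set_0Vmem A) => [-> | [v vA]]; first by rewrite cards0.
by move: (A_D1 v vA); rewrite (cardsD1 v A) vA add1n eqSS lt0n.
Qed.

Lemma set_mem_id (T : finType) (A : {set T}) : [set v | v \in A] = A.
Proof. by apply/setP => v; rewrite inE. Qed.

Lemma ip_objective_support (R : nzRingType) (T : finType) (s : T -> R) (x : T -> bool) :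
  ip_objective s x = \sum_(v in [set v | x v]) s v.
Proof.
rewrite /ip_objective [RHS]big_mkcond; apply: eq_bigr => v _.
by rewrite inE; case: (x v); rewrite ?mulr1 ?mulr0.
Qed.

Section Forts.
Variables (T : finType) (e : rel T).

Definition is_fortb (F : {set T}) : bool :=
  (F != set0) && [forall u, (u \notin F) ==> (#|[set w in F | e u w]| != 1)%N].

Lemma is_fortP (F : {set T}) : reflect (is_fort e F) (is_fortb F).
Proof.
apply: (iffP andP) => [[F_n0 /forallP F_fort] | [F_n0 F_fort]]; split => //.
  by move=> u uF; have := F_fort u; rewrite uF.
by apply/forallP => u; apply/implyP; apply: F_fort.
Qed.

Lemma setT_fort : (0 < #|T|)%N -> is_fort e [set: T].
Proof.
move=> /card_gt0P[v _]; split; last by move=> u; rewrite inE.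
by apply/set0Pn; exists v; rewrite inE.
Qed.

Lemma min_weight_fort_exists (R : realDomainType) (s : T -> R) :
  (0 < #|T|)%N ->
  exists2 F, is_fort e F & forall G, is_fort e G -> \sum_(v in F) s v <= \sum_(v in G) s v.
Proof.
move=> /setT_fort/is_fortP T_fort.
case: (arg_minP (fun F : {set T} => \sum_(v in F) s v) T_fort) => F /is_fortP F_fort F_min.
by exists F => // G /is_fortP; apply: F_min.
Qed.

Hypothesis e_sym : symmetric e.

Lemma ip_feasible_fort (R : numDomainType) (x : T -> bool) :
  @ip_feasible R T e x <-> is_fort e [set v | x v].
Proof.
set X := [set v | x v].
have nonempty : (1 <= \sum_v ((x v)%:R : R)) = (X != set0).
  rewrite sumr_indicator_card ler1n card_gt0.
  by congr (_ != _); apply/setP => v; rewrite !inE.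
have constraint v u : (0 <= ((x u)%:R : R) - (x v)%:R + \sum_(w | e u w && (w != v)) (x w)%:R)
    = (x v <= x u + #|[set w in X | e u w] :\ v|)%N.
  rewrite sumr_indicator_card addrAC subr_ge0 -natrD ler_nat.
  congr (_ <= _ + _)%N; apply: eq_card => w; rewrite !inE.
  by case: (e u w) (x w) (w != v) => [] [] [].
rewrite /ip_feasible nonempty; split=> -[X_n0 X_prop]; split=> //.
- move=> u; rewrite inE => xu; apply/card_neq1P => v; rewrite !inE => /andP[xv e_uv].
  by move: (X_prop v u); rewrite constraint e_sym e_uv xv (negbTE xu); apply.
- move=> v u e_vu; rewrite constraint.
  case xv: (x v) => //; case xu: (x u); first exact: leq_addr.
  apply: (card_neq1P _ (X_prop u _)); first by rewrite inE xu.
  by rewrite !inE xv -e_sym.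
Qed.

Lemma ip_optimal_min_fort (R : numDomainType) (s : T -> R) (x : T -> bool) :
  @ip_optimal R T e s x <->
  is_fort e [set v | x v] /\
  forall F, is_fort e F -> \sum_(v in [set v | x v]) s v <= \sum_(v in F) s v.
Proof.
have fort_feasible F : is_fort e F -> @ip_feasible R T e (mem F).
  by move=> F_fort; apply/ip_feasible_fort; rewrite set_mem_id.
split=> [[/ip_feasible_fort X_fort X_min] | [X_fort X_min]]; split=> //.
- by move=> F /fort_feasible/X_min; rewrite !ip_objective_support set_mem_id.
- exact/ip_feasible_fort.
- by move=> y /ip_feasible_fort/X_min; rewrite !ip_objective_support.
Qed.

End Forts.

Theorem theorem5p6 (R : realFieldType) (T : finType) (e : rel T)
    (hG : simple_graph e) (hV : (0 < #|T|)%N)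
    (s : T -> R) (hs : forall v, 0 <= s v <= 1) :
  (exists F : {set T}, is_fort e F /\ \sum_(v in F) s v < 1) <->
  (forall x : T -> bool, @ip_optimal R T e s x -> ip_objective s x < 1).
Proof.
have [e_sym _] := hG.
split=> [[F [F_fort F_light]] x /(ip_optimal_min_fort e_sym)[_ X_min] | opt_light].
  by rewrite ip_objective_support; apply: le_lt_trans (X_min F F_fort) F_light.
have [F F_fort F_min] := min_weight_fort_exists e s hV.
exists F; split=> //; rewrite -(set_mem_id F) -ip_objective_support.
by apply/opt_light/(ip_optimal_min_fort e_sym); rewrite set_mem_id.
Qed.
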